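(* Let $n\ge 2$ be an integer and let $e$ be the order of the element $b^{-n}a^{-n}(ab)^{n}$ in the Schur multiplier $M(R(2,n))$. If $G$ is any finite group of exponent $n$, then the exponent of $M(G)$ divides $ne$.
   Context: $R(2,n)$ denotes the largest finite $2$-generator group of exponent $n$, written as $R(2,n)=F/R$ with $F$ the free group on free generators $a,b$. For a group $G=F/R$ with $F$ free, the Schur multiplier is given by Hopf's formula $M(G)=(R\cap F')/[F,R]$, a subgroup of $F/[F,R]$. The element $b^{-n}a^{-n}(ab)^{n}[F,R]$ lies in $(R\cap F')/[F,R]=M(R(2,n))$ and $e$ is its order there. *)

From mathcomp Require Import all_boot all_fingroup all_solvable.
Set Implicit Arguments. Unset Strict Implicit. Unset Printing Implicit Defensive.

(* Free group on a type X: words over letters (x, true) = x, (x, false) = x^-1.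
   Two words represent the same free-group element iff their free reductions
   (wreduce) coincide.  Subgroups of the free group are represented by
   predicates on words that are closed under free equivalence (wgen). *)
Section FreeGroup.
Variable X : eqType.
Definition letter := (X * bool)%type.
Definition word := seq letter.
Definition linv (l : letter) : letter := (l.1, ~~ l.2).
Definition push (l : letter) (s : word) : word :=
  if s is l' :: s' then (if l' == linv l then s' else l :: s) else [:: l].
Definition wreduce (w : word) : word := foldr push [::] w.
Definition winv (w : word) : word := rev (map linv w).
Definition wcomm (u v : word) : word := winv u ++ winv v ++ u ++ v.
Definition wexp (w : word) (k : nat) : word := flatten (nseq k w).

Inductive wgen (S : word -> Prop) : word -> Prop :=
 | wgen_one : wgen S [::]
 | wgen_in w : S w -> wgen S w
 | wgen_mul u v : wgen S u -> wgen S v -> wgen S (u ++ v)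
 | wgen_inv u : wgen S u -> wgen S (winv u)
 | wgen_eq u v : wgen S u -> wreduce u = wreduce v -> wgen S v.

Definition fderived : word -> Prop := wgen (fun w => exists u v, w = wcomm u v).
Definition fcommR (R : word -> Prop) : word -> Prop :=
  wgen (fun w => exists f r, R r /\ w = wcomm f r).

Definition weval (gT : finGroupType) (f : X -> gT) (w : word) : gT :=
  foldr (fun l g => ((if l.2 then f l.1 else (f l.1)^-1) * g)%g) 1%g w.
End FreeGroup.

Definition wa : word bool := [:: (true, true)].
Definition wb : word bool := [:: (false, true)].

(* R = kernel of F -> R(2,n): the intersection of the kernels of all maps of F
   into finite groups of exponent dividing n (R(2,n) is the largest finite
   2-generator group of exponent n). *)
Definition RBkernel (n : nat) (w : word bool) : Prop :=
  forall (hT : finGroupType) (x y : hT),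
    exponent [set: hT] %| n ->
    weval (fun c : bool => if c then x else y) w = 1%g.

Definition wtarget (n : nat) : word bool :=
  wexp (winv wb) n ++ wexp (winv wa) n ++ wexp (wa ++ wb) n.

(* Standard presentation of a finite group G (= [set: gT]):
   F free on the elements of G, R = kernel of the evaluation F -> G. *)
Definition Rker (gT : finGroupType) (w : word gT) : Prop :=
  weval (fun x : gT => x) w = 1%g.

From mathcomp Require Import all_boot all_fingroup all_solvable.
Set Implicit Arguments. Unset Strict Implicit. Unset Printing Implicit Defensive.

(* Let G = F/R with F free and N = [F,R]; modulo N every element of R is
   central.  For x, y in F the words X = x^n, Y = y^n and c = Y^-1 X^-1 (xy)^n
   lie in R because G has exponent n, and the substitution a |-> x, b |-> y
   sends the relators of R(2,n) into R, hence c^e into N.  So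
   (xy)^(ne) = (X Y c)^e = X^e Y^e c^e = x^(ne) y^(ne) mod N: the power map
   w |-> w^(ne) is a homomorphism from F to R/N, whose image is central, so it
   kills every commutator and maps F' into N.  Only c^e in [F,R(2,n)] is used,
   not the minimality of e. *)

Section FreeReduction.
Variable X : eqType.
Implicit Types (u v w s t : word X) (l : letter X).

Lemma linvK : involutive (@linv X).
Proof. by case=> x b; rewrite /linv /= negbK. Qed.

Fixpoint reduced s : bool :=
  if s is l :: s' then
    (if s' is l' :: _ then (l' != linv l) && reduced s' else true)
  else true.

Lemma reduced_behead l s : reduced (l :: s) -> reduced s.
Proof. by case: s => //= l' s /andP[]. Qed.

Lemma reduced_push l s : reduced s -> reduced (push l s).
Proof.
case: s => [|l' s'] //=; case: ifP => [_|/negbT nl'] rs; first exact: reduced_behead rs.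
by rewrite /= nl' rs.
Qed.

Lemma push_linvK l s : reduced s -> push l (push (linv l) s) = s.
Proof.
case: s => [|l' s'] /=; first by rewrite ?eqxx.
rewrite linvK; case: eqP => [->|_] rs; last by rewrite /push eqxx.
by move: rs; case: s' => //= l'' s'' /andP[/negbTE ->].
Qed.

Lemma reduced_foldr_push s t : reduced s -> reduced (foldr (@push X) s t).
Proof. by move=> rs; elim: t => //= l t; apply: reduced_push. Qed.

Lemma reduced_wreduce u : reduced (wreduce u).
Proof. exact: reduced_foldr_push. Qed.

Lemma foldr_push_wreduce s u : reduced s ->
  foldr (@push X) s u = foldr (@push X) s (wreduce u).
Proof.
move=> rs; elim: u => //= l u ->; case: (wreduce u) (reduced_wreduce u) => //= l' t rt.
by case: eqP => [->|_] //=; rewrite push_linvK // reduced_foldr_push // (reduced_behead rt).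
Qed.

Lemma wreduce_cat u v : wreduce (u ++ v) = foldr (@push X) (wreduce v) (wreduce u).
Proof. by rewrite /wreduce foldr_cat -foldr_push_wreduce // reduced_wreduce. Qed.

Lemma wreduce_id u : wreduce (wreduce u) = wreduce u.
Proof. by rewrite /wreduce -foldr_push_wreduce. Qed.

Lemma wreduce_catr u v : wreduce (u ++ v) = wreduce (u ++ wreduce v).
Proof. by rewrite !wreduce_cat wreduce_id. Qed.

Lemma wreduce_catl u v : wreduce (u ++ v) = wreduce (wreduce u ++ v).
Proof. by rewrite !wreduce_cat wreduce_id. Qed.

Lemma wreduce_cat_congr u u' v v' : wreduce u = wreduce u' -> wreduce v = wreduce v' ->
  wreduce (u ++ v) = wreduce (u' ++ v').
Proof. by move=> eu ev; rewrite !wreduce_cat eu ev. Qed.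

Lemma winv_cat u v : winv (u ++ v) = winv v ++ winv u.
Proof. by rewrite /winv map_cat rev_cat. Qed.

Lemma winv_cons l u : winv (l :: u) = winv u ++ [:: linv l].
Proof. by rewrite /winv /= rev_cons -cats1. Qed.

Lemma winvK : involutive (@winv X).
Proof.
by move=> u; rewrite /winv map_rev revK -map_comp map_id_in // => l _ /=; rewrite linvK.
Qed.

Lemma wreduce_mulV u : wreduce (u ++ winv u) = [::].
Proof. by elim: u => //= l u IH; rewrite winv_cons catA wreduce_cat IH /= eqxx. Qed.

Lemma wreduce_Vmul u : wreduce (winv u ++ u) = [::].
Proof. by rewrite -{2}(winvK u) wreduce_mulV. Qed.

Lemma wreduce_cancel s w t : wreduce (s ++ w ++ winv w ++ t) = wreduce (s ++ t).
Proof.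
have cancel_wt : wreduce (w ++ winv w ++ t) = wreduce t.
  by rewrite catA wreduce_catl wreduce_mulV.
by rewrite wreduce_catr cancel_wt -wreduce_catr.
Qed.

Lemma wreduce_cancelV s w t : wreduce (s ++ winv w ++ w ++ t) = wreduce (s ++ t).
Proof. by rewrite -{2}(winvK w) wreduce_cancel. Qed.

Lemma wexpS w k : wexp w k.+1 = w ++ wexp w k.
Proof. by []. Qed.

Lemma wexpD w m k : wexp w (m + k) = wexp w m ++ wexp w k.
Proof. by rewrite /wexp nseqD flatten_cat. Qed.

Lemma wexpM w m k : wexp w (m * k) = wexp (wexp w m) k.
Proof. by elim: k => [|k IH]; rewrite ?muln0 // mulnS wexpD IH. Qed.

Lemma winv_wexp w k : winv (wexp w k) = wexp (winv w) k.
Proof.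
elim: k => // k IH.
by rewrite wexpS winv_cat IH -addn1 wexpD /wexp /= cats0.
Qed.

Lemma wreduce_wexp_congr u v k : wreduce u = wreduce v ->
  wreduce (wexp u k) = wreduce (wexp v k).
Proof. by move=> euv; elim: k => // k IH; apply: wreduce_cat_congr. Qed.

Lemma wreduce_wexp_nil k : wreduce (wexp [::] k : word X) = [::].
Proof. by elim: k. Qed.

Lemma winv_wcomm u v : winv (wcomm u v) = wcomm v u.
Proof. by rewrite /wcomm !winv_cat !winvK !catA. Qed.

End FreeReduction.

Section Evaluation.
Variables (X : eqType) (gT : finGroupType) (h : X -> gT).
Implicit Types (u v : word X).

Lemma weval_cat u v : weval h (u ++ v) = (weval h u * weval h v)%g.
Proof. by elim: u => /= [|l u ->]; rewrite ?mul1g ?mulgA. Qed.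

Lemma weval_winv u : weval h (winv u) = (weval h u)^-1%g.
Proof.
elim: u => /= [|[x b] u IH]; first by rewrite invg1.
by rewrite winv_cons weval_cat IH /= mulg1 invMg; case: b; rewrite ?invgK.
Qed.

Lemma weval_wexp u k : weval h (wexp u k) = (weval h u ^+ k)%g.
Proof. by elim: k => // k IH; rewrite wexpS weval_cat IH expgS. Qed.

End Evaluation.

Lemma eq_weval (X : eqType) (gT : finGroupType) (h h' : X -> gT) : h =1 h' -> weval h =1 weval h'.
Proof. by move=> eh; elim=> //= l u ->; rewrite eh. Qed.

Section Substitution.
Variables (X Y : eqType) (f : X -> word Y).
Implicit Types (u v : word X).

Definition lsubst (l : letter X) : word Y := if l.2 then f l.1 else winv (f l.1).

Definition wsubst u : word Y := flatten (map lsubst u).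

Lemma wsubst_cat u v : wsubst (u ++ v) = wsubst u ++ wsubst v.
Proof. by rewrite /wsubst map_cat flatten_cat. Qed.

Lemma lsubst_linv l : lsubst (linv l) = winv (lsubst l).
Proof. by case: l => x []; rewrite /lsubst /= ?winvK. Qed.

Lemma wsubst_winv u : wsubst (winv u) = winv (wsubst u).
Proof.
elim: u => // l u IH.
by rewrite winv_cons wsubst_cat IH /wsubst /= cats0 (lsubst_linv l) winv_cat.
Qed.

Lemma wsubst_wexp u k : wsubst (wexp u k) = wexp (wsubst u) k.
Proof. by elim: k => // k IH; rewrite !wexpS wsubst_cat IH. Qed.

Lemma wreduce_wsubst u : wreduce (wsubst u) = wreduce (wsubst (wreduce u)).
Proof.
elim: u => // l u IH; rewrite /= wreduce_catr IH -wreduce_catr.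
case: (wreduce u) => [|l' t] //=; case: eqP => [->|_] //.
by rewrite /wsubst /= (lsubst_linv l) (wreduce_cancel [::]).
Qed.

Lemma wreduce_wsubst_congr u v : wreduce u = wreduce v ->
  wreduce (wsubst u) = wreduce (wsubst v).
Proof. by move=> euv; rewrite wreduce_wsubst euv -wreduce_wsubst. Qed.

Lemma fcommR_wsubst (R : word X -> Prop) (S : word Y -> Prop) w :
  (forall r, R r -> S (wsubst r)) -> fcommR R w -> fcommR S (wsubst w).
Proof.
move=> RS; elim=> {w} [|_ [g [r [Rr ->]]]|u v _ IHu _ IHv|u _ IH|u v _ IH euv].
- exact: wgen_one.
- rewrite /wcomm !wsubst_cat !wsubst_winv; apply: wgen_in.
  by exists (wsubst g), (wsubst r); split; first exact: RS.
- by rewrite wsubst_cat; apply: wgen_mul.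
- by rewrite wsubst_winv; apply: wgen_inv.
- exact: wgen_eq IH (wreduce_wsubst_congr euv).
Qed.

Lemma weval_wsubst (gT : finGroupType) (h : Y -> gT) u :
  weval h (wsubst u) = weval (fun x => weval h (f x)) u.
Proof.
by elim: u => // [[x b] u IH]; rewrite /= weval_cat IH /lsubst; case: b; rewrite ?weval_winv.
Qed.

End Substitution.

Section CongruenceModCommR.
Variables (X : eqType) (R : word X -> Prop).
Implicit Types (u v w s t g r : word X).
Local Notation N := (fcommR R).

Lemma fcommR_wreduce u v : N u -> wreduce u = wreduce v -> N v.
Proof. exact: wgen_eq. Qed.

Lemma fcommR_nil u : wreduce u = [::] -> N u.
Proof. by move=> eu; apply: fcommR_wreduce (wgen_one _) _. Qed.

Lemma fcommR_comm g r : R r -> N (wcomm g r).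
Proof. by move=> Rr; apply: wgen_in; exists g, r. Qed.

(* [F,R] is normal: [f,r]^g = [f g, r] [g, r]^-1. *)
Lemma fcommR_conj g u : N u -> N (winv g ++ u ++ g).
Proof.
elim=> {u} [|_ [f [r [Rr ->]]]|u v _ IHu _ IHv|u _ IH|u v _ IH euv].
- by apply: fcommR_nil; rewrite wreduce_Vmul.
- apply: fcommR_wreduce (wgen_mul (fcommR_comm (f ++ g) Rr) (wgen_inv (fcommR_comm g Rr))) _.
  rewrite winv_wcomm /wcomm winv_cat.
  have -> : ((winv g ++ winv f) ++ winv r ++ (f ++ g) ++ r) ++ winv r ++ winv g ++ r ++ g
     = (winv g ++ winv f ++ winv r ++ f ++ g) ++ r ++ winv r ++ (winv g ++ r ++ g)
    by rewrite -!catA.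
  rewrite wreduce_cancel.
  have -> : (winv g ++ winv f ++ winv r ++ f ++ g) ++ winv g ++ r ++ g
     = (winv g ++ winv f ++ winv r ++ f) ++ g ++ winv g ++ (r ++ g)
    by rewrite -!catA.
  by rewrite wreduce_cancel -!catA.
- apply: fcommR_wreduce (wgen_mul IHu IHv) _.
  have -> : (winv g ++ u ++ g) ++ winv g ++ v ++ g = (winv g ++ u) ++ g ++ winv g ++ (v ++ g)
    by rewrite -!catA.
  by rewrite wreduce_cancel -!catA.
- by move: (wgen_inv IH); rewrite !winv_cat winvK catA.
- apply: fcommR_wreduce IH _.
  exact: wreduce_cat_congr (wreduce_cat_congr euv _).
Qed.

Definition fcongr u v := N (u ++ winv v).

Lemma fcongr_refl u : fcongr u u.
Proof. by apply: fcommR_nil; rewrite wreduce_mulV. Qed.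

Lemma fcongr_sym u v : fcongr u v -> fcongr v u.
Proof. by move/wgen_inv; rewrite /fcongr winv_cat winvK. Qed.

Lemma fcongr_trans v u w : fcongr u v -> fcongr v w -> fcongr u w.
Proof.
by move=> uv vw; apply: fcommR_wreduce (wgen_mul uv vw) _; rewrite -catA wreduce_cancelV.
Qed.

Lemma fcongr_wreduce u v : wreduce u = wreduce v -> fcongr u v.
Proof. by move=> euv; apply: fcommR_nil; rewrite wreduce_catl euv -wreduce_catl wreduce_mulV. Qed.

Lemma fcongr_catr w u v : fcongr u v -> fcongr (u ++ w) (v ++ w).
Proof.
by move=> uv; apply: fcommR_wreduce uv _; rewrite winv_cat -catA wreduce_cancel.
Qed.

Lemma fcongr_catl w u v : fcongr u v -> fcongr (w ++ u) (w ++ v).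
Proof.
by move/(fcommR_conj (winv w)); rewrite /fcongr winvK winv_cat -!catA.
Qed.

Lemma fcongr_fcommR u v : fcongr u v -> N v -> N u.
Proof.
move=> uv Nv; apply: fcommR_wreduce (wgen_mul uv Nv) _.
by rewrite -catA -[winv v ++ v]cats0 -catA wreduce_cancelV cats0.
Qed.

Lemma fcongr_cat_fcommR s t : N t -> fcongr (s ++ t) s.
Proof. by move/(fcommR_conj (winv s)); rewrite /fcongr winvK -catA. Qed.

Hypothesis R_winv : forall r, R r -> R (winv r).

(* [g^-1, r^-1]^-1 = r^-1 g^-1 r g, so R is central modulo [F,R]. *)
Lemma fcongr_central r g : R r -> fcongr (r ++ g) (g ++ r).
Proof.
move=> Rr; move: (wgen_inv (fcommR_comm (winv g) (R_winv Rr))).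
by rewrite /fcongr winv_wcomm /wcomm !winvK winv_cat -!catA.
Qed.

Hypotheses (R_nil : R [::]) (R_cat : forall r s, R r -> R s -> R (r ++ s)).

Lemma R_wexp r k : R r -> R (wexp r k).
Proof. by move=> Rr; elim: k => // k; apply: R_cat. Qed.

Lemma fcongr_wexp_cat r s k : R r -> R s ->
  fcongr (wexp (r ++ s) k) (wexp r k ++ wexp s k).
Proof.
move=> Rr Rs; elim: k => [|k IH]; first exact: fcongr_refl.
apply: fcongr_trans (fcongr_catl _ IH) _; rewrite -!catA; apply: fcongr_catl.
by rewrite !catA; apply/fcongr_catr/fcongr_sym/fcongr_central/R_wexp.
Qed.

Variables n e : nat.
Hypothesis R_wexpn : forall w, R (wexp w n).
Hypothesis fcommR_target : forall x y,
  N (wexp (winv (wexp y n) ++ winv (wexp x n) ++ wexp (x ++ y) n) e).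

Lemma fcongr_wexp_mul x y :
  fcongr (wexp (x ++ y) (n * e)) (wexp x (n * e) ++ wexp y (n * e)).
Proof.
rewrite !wexpM; set X' := wexp x n; set Y' := wexp y n; set Z := wexp (x ++ y) n.
set c := winv Y' ++ winv X' ++ Z.
have Rc : R c by apply/R_cat/R_cat/R_wexpn; apply/R_winv/R_wexpn.
have e_xyc : wreduce Z = wreduce (X' ++ Y' ++ c).
  by rewrite /c wreduce_cancel (wreduce_cancel [::]).
apply: fcongr_trans (fcongr_wreduce (wreduce_wexp_congr e e_xyc)) _.
apply: fcongr_trans (fcongr_wexp_cat e (R_wexpn x) (R_cat (R_wexpn y) Rc)) _.
apply/fcongr_catl/(fcongr_trans (fcongr_wexp_cat e (R_wexpn y) Rc)).
exact: fcongr_cat_fcommR (fcommR_target x y).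
Qed.

Lemma fcommR_wexp_fderived w : fderived w -> N (wexp w (n * e)).
Proof.
have R_wexpne v : R (wexp v (n * e)) by rewrite wexpM; apply: R_wexp.
elim=> {w} [|_ [u [v ->]]|u v _ IHu _ IHv|u _ IH|u v _ IH euv].
- by apply: fcommR_nil; rewrite wreduce_wexp_nil.
- set U := wexp u (n * e); set V := wexp v (n * e).
  apply: (@fcongr_fcommR _ (winv V ++ winv U ++ U ++ V)); last first.
    by apply: fcommR_nil; rewrite (wreduce_cancelV (winv V) U V) wreduce_Vmul.
  apply: fcongr_trans (fcongr_wexp_mul _ _) _; rewrite winv_wexp -/U.
  apply: fcongr_trans (fcongr_catl _ (fcongr_wexp_mul _ _)) _; rewrite winv_wexp -/V.
  apply: fcongr_trans (fcongr_catl _ (fcongr_catl _ (fcongr_wexp_mul _ _))) _.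
  rewrite -!winv_wexp -/U -/V !catA; do 2 apply: fcongr_catr.
  exact/fcongr_central/R_winv/R_wexpne.
- exact: fcongr_fcommR (fcongr_wexp_mul _ _) (wgen_mul IHu IHv).
- by rewrite -winv_wexp; apply: wgen_inv.
- exact: fcommR_wreduce IH (wreduce_wexp_congr _ euv).
Qed.

End CongruenceModCommR.

Section ExponentPresentation.
Variables (gT : finGroupType) (n : nat).
Hypothesis expG : exponent [set: gT] = n.
Implicit Types (u v : word gT).

Lemma Rker_winv u : Rker u -> Rker (winv u).
Proof. by rewrite /Rker weval_winv => ->; rewrite invg1. Qed.

Lemma Rker_cat u v : Rker u -> Rker v -> Rker (u ++ v).
Proof. by rewrite /Rker weval_cat => -> ->; rewrite mulg1. Qed.

Lemma Rker_wexpn u : Rker (wexp u n).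
Proof. by rewrite /Rker weval_wexp -expG expg_exponent ?inE. Qed.

Definition subst_ab (x y : word gT) (c : bool) : word gT := if c then x else y.

Lemma fcommR_subst_ab x y w :
  fcommR (RBkernel n) w -> fcommR (@Rker gT) (wsubst (subst_ab x y) w).
Proof.
apply: fcommR_wsubst => r RBr.
rewrite /Rker weval_wsubst -(RBr _ (weval id x) (weval id y)); last by rewrite expG.
by apply: eq_weval => -[].
Qed.

Lemma wsubst_wtarget x y :
  wsubst (subst_ab x y) (wtarget n) =
    winv (wexp y n) ++ winv (wexp x n) ++ wexp (x ++ y) n.
Proof. by rewrite /wtarget !wsubst_cat !wsubst_wexp !wsubst_winv /wsubst /= !cats0 -!winv_wexp. Qed.

End ExponentPresentation.

Theorem theorem1 (n e : nat) (gT : finGroupType) :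
  2 <= n ->
  0 < e ->
  fcommR (RBkernel n) (wexp (wtarget n) e) ->
  (forall k, 0 < k < e -> ~ fcommR (RBkernel n) (wexp (wtarget n) k)) ->
  exponent [set: gT] = n ->
  forall w : word gT, Rker w -> fderived w ->
    fcommR (@Rker gT) (wexp w (n * e)).
Proof.
move=> _ _ target _ expG w _ w_derived.
apply: (fcommR_wexp_fderived (@Rker_winv gT) (erefl : Rker [::]) (@Rker_cat gT)) w_derived.
- exact: Rker_wexpn expG.
- move=> x y; rewrite -wsubst_wtarget -wsubst_wexp.
  exact (fcommR_subst_ab expG x y target).
Qed.
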